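(* For any finite group $G$, the difference graph $\mathcal{D}(G)$ is Eulerian.
   Context: For a finite group $G$ with identity $e$: the intersection power graph $\mathcal{G}_I(G)$ has vertex set $G$, two distinct non-identity vertices $x,y$ being adjacent iff $\langle x\rangle\cap\langle y\rangle\neq\{e\}$, and $e$ being adjacent to every other vertex. The power graph $\mathcal{P}(G)$ has vertex set $G$, two distinct vertices being adjacent iff one is a power of the other. The difference graph $\mathcal{D}(G)$ is the graph on vertex set $G$ with edge set $E(\mathcal{G}_I(G))\setminus E(\mathcal{P}(G))$, with all isolated vertices removed. *)

From mathcomp Require Import all_boot all_fingroup.
Set Implicit Arguments. Unset Strict Implicit. Unset Printing Implicit Defensive.
Import GroupScope.
Local Open Scope group_scope.

Section Graphs.
Variable gT : finGroupType.

Definition ipg_adj (x y : gT) : bool :=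
  (x != y) && [|| x == 1, y == 1 | <[x]> :&: <[y]> != 1].

Definition pg_adj (x y : gT) : bool :=
  (x != y) && ((x \in <[y]>) || (y \in <[x]>)).

Definition diff_adj (x y : gT) : bool := ipg_adj x y && ~~ pg_adj x y.

Definition diff_vertices (G : {set gT}) : {set gT} :=
  [set x in G | [exists y in G, diff_adj x y]].

Definition eulerian (V : {set gT}) (e : rel gT) : Prop :=
  forall x, x \in V -> ~~ odd #|[set y in V | e x y]|.

Definition diff_graph_eulerian (G : {set gT}) : Prop :=
  eulerian (diff_vertices G) diff_adj.
End Graphs.

(* Inversion maps the D(G)-neighbourhood of any vertex to itself, since
   x and y^-1 generate the same cyclic subgroups as x and y.  It has no fixed
   point there: an involution y adjacent to x has <[y]> of prime order meeting
   <[x]> nontrivially, so y would lie in <[x]>, i.e. be a power of x.  A set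
   carrying a fixed-point-free involution has even size. *)

From mathcomp Require Import all_boot all_fingroup.
From mathcomp Require Import cyclic.

Import GroupScope.
Local Open Scope group_scope.

Section FixpointFreeInvolution.

Variables (T : finType) (f : T -> T) (S : {set T}).
Hypotheses (fK : involutive f) (fS : {in S, forall y, f y \in S})
  (f_fixfree : {in S, forall y, f y != y}).

Lemma odd_card_fixfree_invol : ~~ odd #|S|.
Proof.
(* [A] keeps the member of smaller rank from each orbit [{y, f y}]. *)
pose A := [set y in S | enum_rank y < enum_rank (f y)].
have memfS y : (f y \in S) = (y \in S).
  by apply/idP/idP=> /fS; rewrite ?fK.
have memfA y : (y \in f @: A) = (f y \in A).
  by rewrite -{1}(fK y) mem_imset //; apply: inv_inj.
have disjA : A :&: f @: A = set0.
  apply/setP=> y; rewrite inE memfA !inE fK.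
  by apply/negP=> /andP[/andP[_ lt_yfy] /andP[_ /(ltn_trans lt_yfy)]]; rewrite ltnn.
have defS : S = A :|: f @: A.
  apply/setP=> y; rewrite inE memfA !inE fK memfS.
  have [yS | //] := boolP (y \in S).
  by rewrite -neq_ltn val_eqE (inj_eq enum_rank_inj) eq_sym f_fixfree.
rewrite defS cardsU disjA cards0 subn0 card_imset; last exact: inv_inj.
by rewrite addnn odd_double.
Qed.

End FixpointFreeInvolution.

Section DifferenceGraph.

Variable gT : finGroupType.
Implicit Types x y : gT.

Lemma diff_adjE x y :
  diff_adj x y = [&& x \notin <[y]>, y \notin <[x]> & <[x]> :&: <[y]> != 1].
Proof.
rewrite /diff_adj /ipg_adj /pg_adj.
have [-> | _] /= := eqVneq x y; first by rewrite cycle_id.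
have [_ | xNy] := boolP (x \in <[y]>); first by rewrite andbF.
have [_ | yNx] := boolP (y \in <[x]>); first by rewrite andbF.
by move: (group1_contra xNy) (group1_contra yNx) => /negbTE-> /negbTE->; rewrite andbT.
Qed.

Lemma diff_adjC x y : diff_adj x y = diff_adj y x.
Proof. by rewrite !diff_adjE setIC andbCA. Qed.

Lemma diff_adjV x y : diff_adj x y^-1 = diff_adj x y.
Proof. by rewrite !diff_adjE cycleV groupV. Qed.

Lemma diff_adj_invg_neq x y : diff_adj x y -> y^-1 != y.
Proof.
rewrite diff_adjE => /and3P[_ yNx nTIxy]; have y_neq1 := group1_contra yNx.
apply: contraNneq yNx => yVy.
have o_y : #[y] = 2 by apply: nt_prime_order y_neq1; rewrite // expg2 -{1}yVy mulVg.
rewrite -cycle_subG; apply: contraR nTIxy => nsub_yx.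
by rewrite setIC prime_TIg // -/#[y] o_y.
Qed.

End DifferenceGraph.

Theorem theorem7p7 (gT : finGroupType) (G : {group gT}) :
  diff_graph_eulerian (G : {set gT}).
Proof.
move=> x /setIdP[xG _].
apply: (@odd_card_fixfree_invol _ (fun y : gT => y^-1)) => [|y|y]; rewrite ?inE.
- exact: invgK.
- case/andP=> /andP[yG _] xy; rewrite groupV yG diff_adjV xy andbT /=.
  by apply/existsP; exists x; rewrite xG diff_adjC diff_adjV.
- by case/andP=> _ /diff_adj_invg_neq.
Qed.
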